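(* Let $\vec u, \vec v, \vec w \in \mathbb{F}^3$ be unit vectors such that $\vec u$ and $\vec v$ are not parallel (i.e. not scalar multiples of each other). Then there exist finitely many linear isometric automorphisms $h_0, \dots, h_{k-1} : \mathbb{F}^3 \to \mathbb{F}^3$, each of which fixes either $\vec u$ or $\vec v$, such that $(h_0 \circ \dots \circ h_{k-1})(\vec u) = \vec w$.
   Context: $\mathbb{F}$ is either $\mathbb{R}$ or $\mathbb{C}$, and $\mathbb{F}^3$ carries its standard inner product. *)

From HB Require Import structures.
From mathcomp Require Import all_boot all_order all_algebra.
From mathcomp Require Import complex.
From mathcomp Require Import Rstruct.
Set Implicit Arguments. Unset Strict Implicit. Unset Printing Implicit Defensive.
Import Order.TTheory GRing.Theory Num.Theory.
Local Open Scope ring_scope.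

(* Vectors of F^3 are row vectors 'rV[F]_3.  The standard inner product is
   <x, y> = \sum_i x_i * conj (y_i), where conj is the identity on the reals
   and complex conjugation on the complex numbers. *)
Definition inner (F : nzRingType) (conj : F -> F) (x y : 'rV[F]_3) : F :=
  \sum_(i < 3) x 0 i * conj (y 0 i).

Definition unit_vec (F : nzRingType) (conj : F -> F) (x : 'rV[F]_3) : Prop :=
  inner conj x x = 1.

Definition not_parallel (F : nzRingType) (u v : 'rV[F]_3) : Prop :=
  (~ exists a : F, u = a *: v) /\ (~ exists a : F, v = a *: u).

Definition lin_isom_aut (F : nzRingType) (conj : F -> F)
    (f : 'rV[F]_3 -> 'rV[F]_3) : Prop :=
  [/\ (forall (a : F) (x y : 'rV[F]_3), f (a *: x + y) = a *: f x + f y),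
      bijective f
    & (forall x : 'rV[F]_3, inner conj (f x) (f x) = inner conj x x)].

Definition compose_all (T : Type) (hs : seq (T -> T)) : T -> T :=
  foldr (fun h acc => h \o acc) id hs.

Definition lemma3p5_prop (F : nzRingType) (conj : F -> F) : Prop :=
  forall u v w : 'rV[F]_3,
    unit_vec conj u -> unit_vec conj v -> unit_vec conj w ->
    not_parallel u v ->
    exists hs : seq ('rV[F]_3 -> 'rV[F]_3),
      (forall h, List.In h hs ->
         lin_isom_aut conj h /\ (h u = u \/ h v = v)) /\
      compose_all hs u = w.

From mathcomp Require Import all_boot all_order all_algebra.
From mathcomp Require Import complex.
From mathcomp Require Import Rstruct.
From Stdlib Require Import Reals.
From mathcomp Require Import ring.
Set Implicit Arguments. Unset Strict Implicit. Unset Printing Implicit Defensive.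
Import Order.TTheory GRing.Theory Num.Theory.
Local Open Scope ring_scope.

(* For unit vectors x <> y, the map z |-> z - (<z, n> / <x, n>) n with n = x - y
   is a unitary reflection sending x to y and fixing every a with <x, a> = <y, a>.
   Call (x, y) reachable when a composite of unitary maps, each fixing u or v,
   sends (u, v) to (x, y).  Then <x, y> = <u, v> =: c, and precomposing with a
   reflection fixing u (resp. v) replaces y by any unit y' with <x, y'> = c (resp.
   x by any unit x' with <x', y> = c).  As u and v are not parallel, |c| < 1, so
   two unit vectors x, x' with |c|^2 <= <x, x'> have a common unit partner y' with
   <x, y'> = <x', y'> = c, and the first coordinate can move from x to x'.
   Repeated bisection, whose number of steps is bounded by the Archimedean
   property, extends this to every x' with 0 <= <x, x'>; two such moves, through a
   unit vector orthogonal to u, reach any unit vector w. *)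

Lemma compose_all_cat (T : Type) (hs gs : seq (T -> T)) :
  compose_all (hs ++ gs) =1 compose_all hs \o compose_all gs.
Proof. by elim: hs => [|h hs IH] x //=; rewrite IH. Qed.

Section Hermitian.
Variable F : numFieldType.
Variable conj : F -> F.
Hypothesis conjD : {morph conj : x y / x + y}.
Hypothesis conjM : {morph conj : x y / x * y}.
Hypothesis conjK : involutive conj.
Hypothesis conj_ge0 : forall x, 0 <= x -> conj x = x.
Hypothesis mulJ_ge0 : forall x, 0 <= x * conj x.
Hypothesis mulJ_eq0 : forall x, x * conj x = 0 -> x = 0.

Local Notation "<< x , y >>" := (inner conj x y).
Local Notation unitv x := (unit_vec conj x).
Local Notation V := 'rV[F]_3.

Lemma conj0 : conj 0 = 0.
Proof. exact: conj_ge0. Qed.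

Lemma conj1 : conj 1 = 1.
Proof. exact: conj_ge0. Qed.

Lemma conjN x : conj (- x) = - conj x.
Proof. by apply/eqP; rewrite -subr_eq0 opprK -conjD addNr conj0. Qed.

Lemma conj_eq0 x : (conj x == 0) = (x == 0).
Proof. by apply/eqP/eqP => [|->]; [rewrite -{2}[x]conjK => ->|]; rewrite conj0. Qed.

Lemma conjV x : conj x^-1 = (conj x)^-1.
Proof.
have [->|x0] := eqVneq x 0; first by rewrite invr0 conj0 invr0.
have Jx0 : conj x != 0 by rewrite conj_eq0.
by apply: (mulfI Jx0); rewrite -conjM !mulfV // conj1.
Qed.

Lemma conj_sum (I : finType) (f : I -> F) : conj (\sum_i f i) = \sum_i conj (f i).
Proof. by apply: (big_morph conj conjD conj0). Qed.

Lemma innerDl (x y z : V) : << x + y, z >> = << x, z >> + << y, z >>.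
Proof. by rewrite /inner -big_split; apply: eq_bigr => i _; rewrite !mxE mulrDl. Qed.

Lemma innerZl a (x z : V) : << a *: x, z >> = a * << x, z >>.
Proof. by rewrite /inner mulr_sumr; apply: eq_bigr => i _; rewrite !mxE mulrA. Qed.

Lemma innerNl (x z : V) : << - x, z >> = - << x, z >>.
Proof. by rewrite -scaleN1r innerZl mulN1r. Qed.

Lemma innerBl (x y z : V) : << x - y, z >> = << x, z >> - << y, z >>.
Proof. by rewrite innerDl innerNl. Qed.

Lemma inner_conj (x y : V) : conj << x, y >> = << y, x >>.
Proof. by rewrite /inner conj_sum; apply: eq_bigr => i _; rewrite conjM conjK mulrC. Qed.

Lemma innerDr (x y z : V) : << z, x + y >> = << z, x >> + << z, y >>.
Proof. by rewrite -inner_conj innerDl conjD !inner_conj. Qed.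

Lemma innerZr a (x z : V) : << z, a *: x >> = conj a * << z, x >>.
Proof. by rewrite -inner_conj innerZl conjM inner_conj. Qed.

Lemma innerBr (x y z : V) : << z, x - y >> = << z, x >> - << z, y >>.
Proof. by rewrite -inner_conj innerBl conjD conjN !inner_conj. Qed.

Lemma inner_ge0 (x : V) : 0 <= << x, x >>.
Proof. exact: sumr_ge0. Qed.

Lemma inner_eq0 (x : V) : (<< x, x >> == 0) = (x == 0).
Proof.
apply/idP/eqP => [|->]; last by rewrite /inner big1 // => i _; rewrite mxE mul0r.
rewrite psumr_eq0 // => /allP x0; apply/rowP => i; rewrite mxE.
by apply/mulJ_eq0/eqP/x0; rewrite mem_index_enum.
Qed.

Definition isometric (h : V -> V) := forall z w, << h z, h w >> = << z, w >>.

Lemma lin_isom_aut_id : lin_isom_aut conj idfun.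
Proof. by split=> //; exists idfun. Qed.

(* The identity on n^perp and multiplication by - conj p / p on the line of n. *)
Definition reflection (n : V) (p : F) (z : V) : V := z - (<< z, n >> / p) *: n.

Section Reflection.
Variables (n : V) (p : F).
Hypothesis p0 : p != 0.
Hypothesis nn : << n, n >> = p + conj p.

Let Jp0 : conj p != 0. Proof. by rewrite conj_eq0. Qed.

Lemma reflection_isometric : isometric (reflection n p).
Proof.
move=> z w; rewrite !innerBl !innerBr !innerZl !innerZr nn.
rewrite -(inner_conj w n) -(inner_conj n z) conjM conjV.
by field; rewrite p0 Jp0.
Qed.

Lemma reflectionK : cancel (reflection n p) (reflection n (conj p)).
Proof.
move=> z; rewrite /reflection innerBl innerZl nn.
by apply/rowP => i; rewrite !mxE; field; rewrite p0 Jp0.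
Qed.

End Reflection.

Lemma reflection_lin_isom_aut n p : p != 0 -> << n, n >> = p + conj p ->
  lin_isom_aut conj (reflection n p).
Proof.
move=> p0 nn; split=> [a x y|| x]; last exact: reflection_isometric.
  by rewrite /reflection innerDl innerZl; apply/rowP => i; rewrite !mxE; ring.
exists (reflection n (conj p)); first exact: reflectionK.
by move=> z; rewrite -{1}[p]conjK; apply: reflectionK; rewrite ?conj_eq0 // conjK addrC.
Qed.

Lemma unit_inner_subr (x y : V) : unitv x -> unitv y ->
  << x - y, x - y >> = << x, x - y >> + conj << x, x - y >>.
Proof.
move=> ux uy; rewrite inner_conj !innerBl !innerBr ux uy -(inner_conj y x).
by ring.
Qed.

Lemma exists_isometry_to (x y a : V) : unitv x -> unitv y -> << x, a >> = << y, a >> ->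
  exists h, [/\ lin_isom_aut conj h, isometric h, h a = a & h x = y].
Proof.
move=> ux uy xya; have [<-|xy] := eqVneq x y.
  by exists idfun; split=> //; exact: lin_isom_aut_id.
have nn := unit_inner_subr ux uy; set n := x - y in nn.
have p0 : << x, n >> != 0.
  by apply: contra xy => /eqP p0; rewrite -subr_eq0 -inner_eq0 nn p0 conj0 addr0.
exists (reflection n << x, n >>); split.
- exact: reflection_lin_isom_aut.
- exact: reflection_isometric.
- by rewrite /reflection innerBr -!(inner_conj _ a) xya subrr mul0r scale0r subr0.
- by rewrite /reflection mulfV // scale1r opprB addrC subrK.
Qed.

Lemma exists_orthogonal2 (x x' : V) :
  exists2 m : V, m != 0 & << m, x >> = 0 /\ << m, x' >> = 0.
Proof.
pose A : 'M[F]_(3, 2) := \matrix_(i, j) conj ((if j == ord0 then x else x') 0 i).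
have /rowV0Pn[m /sub_kermxP mA m0] : kermx A != 0.
  by rewrite kermx_eq0 /row_free neq_ltn (leq_ltn_trans (rank_leq_col A)).
have inner_col j : \sum_k m 0 k * A k j = 0.
  by have /matrixP/(_ 0 j) := mA; rewrite !mxE.
exists m => //; split.
- by rewrite -(inner_col ord0); apply: eq_bigr => k _; rewrite mxE.
- by rewrite -(inner_col (lift ord0 ord0)); apply: eq_bigr => k _; rewrite mxE.
Qed.

Hypothesis has_sqrt : forall x : F, 0 <= x -> exists2 s, 0 <= s & s * s = x.

Lemma exists_unit_multiple (z : V) : z != 0 -> exists2 c, 0 <= c & unitv (c *: z).
Proof.
rewrite -inner_eq0 => z0; have [s s0 ss] := has_sqrt (inner_ge0 z).
have s0' : s != 0 by apply: contra z0 => /eqP s0'; rewrite -ss s0' mul0r.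
exists s^-1; first by rewrite invr_ge0.
by rewrite /unit_vec innerZl innerZr conj_ge0 ?invr_ge0 // -ss; field.
Qed.

Lemma exists_unit_orthogonal2 (x x' : V) :
  exists2 m : V, unitv m & << m, x >> = 0 /\ << m, x' >> = 0.
Proof.
have [m m0 [mx mx']] := exists_orthogonal2 x x'.
have [c _ um] := exists_unit_multiple m0.
by exists (c *: m) => //; rewrite !innerZl mx mx' mulr0.
Qed.

Section Reachable.
Variables u v : V.

Definition admissible (h : V -> V) :=
  [/\ lin_isom_aut conj h, h u = u \/ h v = v & isometric h].

Definition reachable (x y : V) := exists hs : seq (V -> V),
  [/\ forall h, List.In h hs -> admissible h,
      compose_all hs u = x & compose_all hs v = y].

Lemma reachable_uv : reachable u v.
Proof. by exists [::]. Qed.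

Lemma compose_all_admissible (hs : seq (V -> V)) :
  (forall h, List.In h hs -> admissible h) ->
  bijective (compose_all hs) /\ isometric (compose_all hs).
Proof.
elim: hs => [|h hs IH] /= adm; first by split=> //; exists idfun.
have [[_ h_bij _] _ h_iso] := adm h (or_introl erefl).
have [hs_bij hs_iso] := IH (fun k hs_k => adm k (or_intror hs_k)).
by split=> [|z w /=]; [exact: bij_comp | rewrite h_iso hs_iso].
Qed.

Lemma reachable_moveR (x y y' : V) : unitv v -> reachable x y -> unitv y' ->
  << x, y' >> = << u, v >> -> reachable x y'.
Proof.
move=> uv [hs [adm <- _]] uy' xy'.
have [[g fK gK] f_iso] := compose_all_admissible adm.
have [h [h_aut h_iso hu hv]] : exists h, [/\ lin_isom_aut conj h, isometric h,
    h u = u & h v = g y'].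
  apply: exists_isometry_to => //; first by rewrite /unit_vec -f_iso gK.
  by rewrite -(inner_conj u) -(inner_conj u (g y')) -(f_iso u (g y')) gK xy'.
exists (hs ++ [:: h]); split.
- by move=> k /(List.in_app_or hs [:: h] k)[/adm //|[<-|[]]]; split=> //; left.
- by rewrite compose_all_cat /= hu.
- by rewrite compose_all_cat /= hv gK.
Qed.

End Reachable.

Lemma reachable_sym (u v x y : V) : reachable u v x y -> reachable v u y x.
Proof.
case=> hs [adm hx hy]; exists hs; split=> // h /adm[h_aut fixes h_iso].
by split=> //; case: fixes; [right | left].
Qed.

Lemma reachable_moveL (u v x y x' : V) : unitv u -> reachable u v x y -> unitv x' ->
  << x', y >> = << u, v >> -> reachable u v x' y.
Proof.
move=> uu /reachable_sym r ux' x'y; apply/reachable_sym/(reachable_moveR uu r ux').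
by rewrite -inner_conj x'y inner_conj.
Qed.

Lemma common_partner (x x' : V) (c : F) : unitv x -> unitv x' ->
  c * conj c <= 1 -> c * conj c <= << x, x' >> ->
  exists2 y, unitv y & << x, y >> = c /\ << x', y >> = c.
Proof.
move=> ux ux' c_le1 c_le; pose r := << x, x' >>.
have r0 : 0 <= r := le_trans (mulJ_ge0 c) c_le.
have r1 : 0 < 1 + r := ltr_wpDr r0 ltr01.
have x'x : << x', x >> = r by rewrite -inner_conj conj_ge0.
have [m um [mx mx']] := exists_unit_orthogonal2 x x'.
have [t t0 tt] : exists2 t, 0 <= t & t * t = 1 - (c * conj c) *+ 2 / (1 + r).
  by apply: has_sqrt; rewrite subr_ge0 ler_pdivrMr // mul1r mulr2n lerD.
pose y := (conj c / (1 + r)) *: (x + x') + t *: m.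
have inner_y z : << z, m >> = 0 -> << z, x + x' >> = 1 + r -> << z, y >> = c.
  move=> zm zxx'; rewrite innerDr !innerZr zxx' zm mulr0 addr0 conjM conjK conjV.
  by rewrite (conj_ge0 (ltW r1)) mulfVK // gt_eqF.
have xy : << x, y >> = c.
  by apply: inner_y; rewrite ?innerDr ?ux // -inner_conj mx conj0.
have x'y : << x', y >> = c.
  by apply: inner_y; rewrite ?innerDr ?x'x ?ux' 1?addrC // -inner_conj mx' conj0.
have my : << m, y >> = t.
  by rewrite innerDr !innerZr innerDr mx mx' um addr0 mulr0 add0r mulr1 conj_ge0.
exists y => //; rewrite /unit_vec {1}/y innerDl !innerZl innerDl xy x'y my tt.
by field; rewrite gt_eqF.
Qed.

Lemma exists_unit_orthogonal_nonneg (x q : V) : unitv x ->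
  exists2 m, unitv m & << x, m >> = 0 /\ 0 <= << m, q >>.
Proof.
move=> ux; pose w := q - << q, x >> *: x.
have wx : << w, x >> = 0 by rewrite innerBl innerZl ux mulr1 subrr.
have [w0|w_neq0] := eqVneq w 0.
  have [m um [mx _]] := exists_unit_orthogonal2 x x.
  exists m => //; split; first by rewrite -inner_conj mx conj0.
  by move/eqP: w0; rewrite subr_eq0 => /eqP ->; rewrite innerZr mx mulr0.
have [a a0 uw] := exists_unit_multiple w_neq0.
exists (a *: w) => //; split; first by rewrite innerZr -inner_conj wx conj0 mulr0.
rewrite innerZl mulr_ge0 //.
have -> : << w, q >> = << w, w >> by rewrite {3}/w innerBr innerZr wx mulr0 subr0.
exact: inner_ge0.
Qed.

Lemma unit_midpoint (p q : V) : unitv p -> unitv q -> 0 <= << p, q >> ->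
  exists2 m, unitv m & [/\ 0 <= << p, m >>, << m, q >> = << p, m >>
    & 1 - << p, m >> <= (1 - << p, q >>) / 2%:R].
Proof.
move=> up uq; pose t := << p, q >>; rewrite -/t => t0.
have qp : << q, p >> = t by rewrite -inner_conj conj_ge0.
have t_le1 : t <= 1.
  have : 0 <= << p - q, p - q >> := inner_ge0 _.
  have -> : << p - q, p - q >> = (1 - t) *+ 2.
    by rewrite !innerBl !innerBr up uq qp -/t; ring.
  by rewrite pmulrn_lge0 // subr_ge0.
have t1 : 0 < 1 + t := ltr_wpDr t0 ltr01.
have [s s0 ss] := has_sqrt (mulrn_wge0 2 (ltW t1)).
have s_neq0 : s != 0.
  apply: contraTneq isT => s0'; move: ss; rewrite s0' mul0r => /esym/eqP.
  by rewrite mulrn_eq0 (gt_eqF t1).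
have two_neq0 : 2%:R != 0 :> F by rewrite pnatr_eq0.
have pm : << p, s^-1 *: (p + q) >> = s / 2%:R.
  rewrite innerZr innerDr up conj_ge0 ?invr_ge0 // -/t.
  have -> : 1 + t = s * s / 2%:R by rewrite ss; field.
  by field.
exists (s^-1 *: (p + q)); last split.
- rewrite /unit_vec innerZl innerZr !innerDl !innerDr up uq qp -/t.
  rewrite conj_ge0 ?invr_ge0 //.
  have -> : 1 + t + (t + 1) = s * s by rewrite ss mulr2n [t + 1]addrC.
  by field.
- by rewrite pm divr_ge0 ?ler0n.
- rewrite pm innerZl innerDl uq -/t.
  have -> : t + 1 = s * s / 2%:R by rewrite ss addrC; field.
  by field.
- (* Since s ^+ 2 = 2 (1 + t), this reduces to (1 + t) ^+ 2 <= 2 (1 + t), i.e. t <= 1. *)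
  rewrite pm -subr_ge0.
  have -> : (1 - t) / 2%:R - (1 - s / 2%:R) = (s - (1 + t)) / 2%:R by field.
  rewrite divr_ge0 ?ler0n // subr_ge0 -(ler_sqr (ltW t1)) // !expr2 ss -mulr_natr.
  by rewrite ler_wpM2l ?(ltW t1) // -[2%:R]/(1 + 1 : F) lerD2l.
Qed.

Hypothesis archi : forall x : F, 0 <= x -> exists n : nat, x <= n%:R.

Section Transitivity.
Variables u v : V.
Hypotheses (uu : unitv u) (uv : unitv v) (u_npar_v : forall a, u != a *: v).

Local Notation c := << u, v >>.

Lemma normJ_inner_lt1 : c * conj c < 1.
Proof.
have e : << u - c *: v, u - c *: v >> = 1 - c * conj c.
  by rewrite !innerBl !innerBr !innerZl !innerZr uu uv -(inner_conj u v); ring.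
by rewrite -subr_gt0 -e lt0r inner_ge0 inner_eq0 subr_eq0 andbT u_npar_v.
Qed.

Definition reachable1 (x : V) := exists y, reachable u v x y.

Lemma reachable1_step (x x' : V) : reachable1 x -> unitv x -> unitv x' ->
  c * conj c <= << x, x' >> -> reachable1 x'.
Proof.
move=> [y xy] ux ux' c_le.
have [y' uy' [xy' x'y']] := common_partner ux ux' (ltW normJ_inner_lt1) c_le.
exists y'; apply: (reachable_moveL uu _ ux' x'y').
exact: (reachable_moveR uv xy uy' xy').
Qed.

Lemma reachable1_halving n (p q : V) : unitv p -> unitv q -> 0 <= << p, q >> ->
  1 - << p, q >> <= 2%:R ^+ n * (1 - c * conj c) -> reachable1 p -> reachable1 q.
Proof.
elim: n p q => [|n IH] p q up uq pq0 pq_le rp.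
  by apply: (reachable1_step rp up uq); move: pq_le; rewrite expr0 mul1r lerD2l lerN2.
have [m um [pm0 mq pm_le]] := unit_midpoint up uq pq0.
have pm_le' : 1 - << p, m >> <= 2%:R ^+ n * (1 - c * conj c).
  by apply: le_trans pm_le _; rewrite ler_pdivrMr ?ltr0n // mulrAC -exprSr.
have rm : reachable1 m := IH p m up um pm0 pm_le' rp.
by apply: (IH m q um uq); rewrite ?mq.
Qed.

Lemma reachable1_nonneg (p q : V) : reachable1 p -> unitv p -> unitv q ->
  0 <= << p, q >> -> reachable1 q.
Proof.
move=> rp up uq pq0; have K0 : 0 < 1 - c * conj c by rewrite subr_gt0 normJ_inner_lt1.
have [N N_ge] : exists N : nat, (1 - c * conj c)^-1 <= N%:R.
  by apply: archi; rewrite invr_ge0 ltW.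
apply: (reachable1_halving (n := N) up uq pq0 _ rp).
apply: (@le_trans _ _ 1); first by rewrite gerBl.
rewrite -ler_pdivrMr // div1r (le_trans N_ge) // -natrX ler_nat ltnW // ltn_expl //.
Qed.

Lemma reachable1_unit (q : V) : unitv q -> reachable1 q.
Proof.
move=> uq; have [m um [um0 mq]] := exists_unit_orthogonal_nonneg q uu.
apply: (reachable1_nonneg _ um uq mq).
apply: (reachable1_nonneg _ uu um); last by rewrite um0.
by exists v; exact: reachable_uv.
Qed.

End Transitivity.

Theorem lemma3p5_prop_hermitian : lemma3p5_prop conj.
Proof.
(* For unit vectors, v = a *: u already implies u = conj a *: v. *)
move=> u v w uu uv uw [u_npar_v _].
have npar a : u != a *: v by apply/eqP => e; apply: u_npar_v; exists a.
have [y [hs [adm hw _]]] := reachable1_unit uu uv npar uw.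
by exists hs; split=> // h /adm[].
Qed.

End Hermitian.

Lemma lemma3p5_real : lemma3p5_prop (fun x : R => x).
Proof.
apply: lemma3p5_prop_hermitian => //.
- by move=> x; rewrite -expr2 sqr_ge0.
- by move=> x /eqP; rewrite mulf_eq0 orbb => /eqP.
- by move=> x x0; exists (Num.sqrt x); rewrite ?sqrtr_ge0 // -expr2 sqr_sqrtr.
- by move=> x x0; exists (Num.bound x); rewrite ltW // archi_boundP.
Qed.

Lemma lemma3p5_complex : lemma3p5_prop (fun z : R[i] => conjc z).
Proof.
apply: lemma3p5_prop_hermitian.
- exact: rmorphD.
- exact: rmorphM.
- exact: conjcK.
- by case=> a b; rewrite lecE /= => /andP[/eqP -> _]; rewrite oppr0.
- exact: mulcJ_ge0.
- by move=> z /eqP; rewrite -sqr_normc expf_eq0 /= normr_eq0 => /eqP.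
- by move=> z z0; exists (sqrtC z); rewrite ?sqrtC_ge0 // -expr2 sqrtCK.
- case=> a b; rewrite lecE /= => /andP[/eqP -> a0]; exists (Num.bound a).
  by rewrite -(rmorph_nat (real_complex R)) complexr0 lecR ltW // archi_boundP.
Qed.

Theorem lemma3p5 :
  lemma3p5_prop (fun x : R => x) /\
  lemma3p5_prop (fun z : R[i] => conjc z).
Proof. by split; [exact: lemma3p5_real | exact: lemma3p5_complex]. Qed.
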